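(* Let $\mathcal{C}$ be a deflation-exact category and let $\mathcal{A}$ be a non-empty full subcategory satisfying axiom (A3). Let $f\colon X\rightarrowtail Y$ and $g\colon Y\rightarrowtail Z$ be inflations. If $f$ is an $\mathcal{A}^{-1}$-inflation, then $g\circ f$ is an inflation.
   Context: A conflation category is an additive category with a class of kernel-cokernel pairs (closed under isomorphisms) called conflations; first map an inflation, second a deflation. A deflation-exact category is a conflation category satisfying: (R0) $1_0$ is a deflation; (R1) composites of deflations are deflations; (R2) pullbacks of deflations along arbitrary morphisms exist and are deflations. (A3): if $a\colon C\rightarrowtail D$ is an inflation and $b\colon C\twoheadrightarrow A$ a deflation with $A\in\mathcal{A}$, the pushout of $a$ along $b$ exists and yields a deflation $D\twoheadrightarrow P$ and an inflation $A\rightarrowtail P$. An $\mathcal{A}^{-1}$-inflation is an inflation whose cokernel lies in $\mathcal{A}$. *)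

Set Implicit Arguments.
Unset Strict Implicit.

Record AddCat := {
  Obj : Type;
  Hom : Obj -> Obj -> Type;
  idm : forall a, Hom a a;
  comp : forall a b c, Hom b c -> Hom a b -> Hom a c;
  comp_assoc : forall a b c d (h : Hom c d) (g : Hom b c) (f : Hom a b),
      comp h (comp g f) = comp (comp h g) f;
  comp_id_l : forall a b (f : Hom a b), comp (idm b) f = f;
  comp_id_r : forall a b (f : Hom a b), comp f (idm a) = f;
  zerom : forall a b, Hom a b;
  addm : forall a b, Hom a b -> Hom a b -> Hom a b;
  oppm : forall a b, Hom a b -> Hom a b;
  addmA : forall a b (f g h : Hom a b), addm f (addm g h) = addm (addm f g) h;
  addmC : forall a b (f g : Hom a b), addm f g = addm g f;
  add0m : forall a b (f : Hom a b), addm (zerom a b) f = f;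
  addNm : forall a b (f : Hom a b), addm (oppm f) f = zerom a b;
  comp_addl : forall a b c (g g' : Hom b c) (f : Hom a b),
      comp (addm g g') f = addm (comp g f) (comp g' f);
  comp_addr : forall a b c (g : Hom b c) (f f' : Hom a b),
      comp g (addm f f') = addm (comp g f) (comp g f');
  zobj : Obj;
  zobj_zero : idm zobj = zerom zobj zobj;
  biprod : forall a b, exists (s : Obj) (i1 : Hom a s) (i2 : Hom b s)
      (p1 : Hom s a) (p2 : Hom s b),
      comp p1 i1 = idm a /\ comp p2 i2 = idm b /\
      addm (comp i1 p1) (comp i2 p2) = idm s
}.

Arguments Hom {_}.
Arguments idm {_}.
Arguments comp {_ a b c}.
Arguments zerom {_}.
Arguments addm {_ a b}.
Arguments oppm {_ a b}.
Arguments zobj {_}.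

Section Defs.
Variable C : AddCat.

Definition IsIso {a b : Obj C} (u : Hom a b) : Prop :=
  exists v : Hom b a, comp v u = idm a /\ comp u v = idm b.

Definition IsKernel {K B D : Obj C} (k : Hom K B) (g : Hom B D) : Prop :=
  comp g k = zerom K D /\
  forall T (h : Hom T B), comp g h = zerom T D ->
    exists! u : Hom T K, comp k u = h.

Definition IsCokernel {A B Q : Obj C} (c : Hom B Q) (f : Hom A B) : Prop :=
  comp c f = zerom A Q /\
  forall T (h : Hom B T), comp h f = zerom A T ->
    exists! u : Hom Q T, comp u c = h.

Definition IsPullback {A B D P : Obj C} (f : Hom A D) (g : Hom B D)
    (p1 : Hom P A) (p2 : Hom P B) : Prop :=
  comp f p1 = comp g p2 /\
  forall T (x : Hom T A) (y : Hom T B), comp f x = comp g y ->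
    exists! u : Hom T P, comp p1 u = x /\ comp p2 u = y.

Definition IsPushout {E A B P : Obj C} (f : Hom E A) (g : Hom E B)
    (q1 : Hom A P) (q2 : Hom B P) : Prop :=
  comp q1 f = comp q2 g /\
  forall T (x : Hom A T) (y : Hom B T), comp x f = comp y g ->
    exists! u : Hom P T, comp u q1 = x /\ comp u q2 = y.

End Defs.

Record ConflStr (C : AddCat) := {
  Confl : forall (A B D : Obj C), Hom A B -> Hom B D -> Prop;
  confl_kc : forall A B D (f : Hom A B) (g : Hom B D),
      Confl f g -> IsKernel f g /\ IsCokernel g f;
  confl_iso : forall A B D (f : Hom A B) (g : Hom B D)
      A' B' D' (f' : Hom A' B') (g' : Hom B' D')
      (a : Hom A' A) (b : Hom B' B) (d : Hom D' D),
      Confl f g -> IsIso a -> IsIso b -> IsIso d ->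
      comp b f' = comp f a -> comp d g' = comp g b -> Confl f' g'
}.

Arguments Confl {_} _ {A B D}.

Section Exact.
Variables (C : AddCat) (E : ConflStr C).

Definition Inflation {A B : Obj C} (f : Hom A B) : Prop :=
  exists (D : Obj C) (g : Hom B D), Confl E f g.

Definition Deflation {B D : Obj C} (g : Hom B D) : Prop :=
  exists (A : Obj C) (f : Hom A B), Confl E f g.

Definition AxR0 : Prop := Deflation (idm (@zobj C)).

Definition AxR1 : Prop :=
  forall (A B D : Obj C) (p : Hom A B) (q : Hom B D),
    Deflation p -> Deflation q -> Deflation (comp q p).

Definition AxR2 : Prop :=
  forall (B D D' : Obj C) (p : Hom B D) (t : Hom D' D),
    Deflation p ->
    exists (P : Obj C) (t' : Hom P B) (p' : Hom P D'),
      IsPullback p t t' p' /\ Deflation p'.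

Definition DeflationExact : Prop := AxR0 /\ AxR1 /\ AxR2.

(* Axiom (A3) for a full subcategory given by the predicate Acl on objects. *)
Definition AxA3 (Acl : Obj C -> Prop) : Prop :=
  forall (X D A : Obj C) (a : Hom X D) (b : Hom X A),
    Inflation a -> Deflation b -> Acl A ->
    exists (P : Obj C) (d : Hom D P) (i : Hom A P),
      IsPushout a b d i /\ Deflation d /\ Inflation i.

Definition AInvInflation (Acl : Obj C -> Prop) {A B : Obj C} (f : Hom A B) : Prop :=
  exists (D : Obj C) (g : Hom B D), Confl E f g /\ Acl D.

End Exact.


Set Implicit Arguments.
Unset Strict Implicit.

(* Push [g] out along the cokernel [c : Y ->> A] of [f]; since [A] lies in the
   subcategory, (A3) gives a deflation [d : Z ->> P] and an inflation
   [i : A >-> P] with [d o g = i o c].  A diagram chase shows that [g o f] is a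
   kernel of [d], and a kernel of a deflation is an inflation because
   conflations are closed under isomorphism. *)

Section Additive.
Variable C : AddCat.

Definition Monic {a b : Obj C} (u : Hom a b) : Prop :=
  forall T (x y : Hom T a), comp u x = comp u y -> x = y.

Lemma addm_self_eq0 (a b : Obj C) (x : Hom a b) : x = addm x x -> x = zerom a b.
Proof.
  intro Hx.
  assert (Hcancel : addm (oppm x) x = addm (oppm x) (addm x x)) by (rewrite <- Hx; reflexivity).
  rewrite addmA, addNm, add0m in Hcancel. symmetry; exact Hcancel.
Qed.

Lemma comp0m (a b c : Obj C) (f : Hom a b) : comp (zerom b c) f = zerom a c.
Proof. apply addm_self_eq0. rewrite <- comp_addl, add0m. reflexivity. Qed.

Lemma compm0 (a b c : Obj C) (g : Hom b c) : comp g (zerom a b) = zerom a c.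
Proof. apply addm_self_eq0. rewrite <- comp_addr, add0m. reflexivity. Qed.

Lemma idm_iso (a : Obj C) : IsIso (idm a).
Proof. exists (idm a). split; apply comp_id_l. Qed.

Lemma monic_comp (a b c : Obj C) (g : Hom b c) (f : Hom a b) :
  Monic g -> Monic f -> Monic (comp g f).
Proof.
  intros Hg Hf T x y Hxy. apply Hf, Hg. rewrite !comp_assoc. exact Hxy.
Qed.

Section Kernel.
Variables (K B D : Obj C) (k : Hom K B) (g : Hom B D).

Lemma kernel_factor T (t : Hom T B) :
  IsKernel k g -> comp g t = zerom T D -> exists s : Hom T K, comp k s = t.
Proof.
  intros [_ Hk] Ht. destruct (Hk T t Ht) as [s [Hs _]]. exists s; exact Hs.
Qed.

Lemma kernel_monic : IsKernel k g -> Monic k.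
Proof.
  intros [Hk0 Hk] T x y Hxy.
  destruct (Hk T (comp k x)) as [u [_ Hu]].
  { rewrite comp_assoc, Hk0. apply comp0m. }
  transitivity u; [symmetry|]; apply Hu; [reflexivity | symmetry; exact Hxy].
Qed.

Lemma kernelI :
  comp g k = zerom K D -> Monic k ->
  (forall T (t : Hom T B), comp g t = zerom T D -> exists s : Hom T K, comp k s = t) ->
  IsKernel k g.
Proof.
  intros Hk0 Hmono Hfactor. split; [exact Hk0|].
  intros T t Ht. destruct (Hfactor T t Ht) as [s Hs].
  exists s. split; [exact Hs|].
  intros s' Hs'. apply Hmono. rewrite Hs, Hs'. reflexivity.
Qed.

End Kernel.

Lemma kernel_iso (K K' B D : Obj C) (k : Hom K B) (k' : Hom K' B) (g : Hom B D) :
  IsKernel k g -> IsKernel k' g -> exists u : Hom K' K, IsIso u /\ comp k u = k'.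
Proof.
  intros Hk Hk'.
  destruct (kernel_factor Hk (proj1 Hk')) as [u Hu].
  destruct (kernel_factor Hk' (proj1 Hk)) as [v Hv].
  exists u. split; [exists v; split | exact Hu].
  - apply (kernel_monic Hk'). rewrite comp_assoc, Hv, Hu, comp_id_r. reflexivity.
  - apply (kernel_monic Hk). rewrite comp_assoc, Hu, Hv, comp_id_r. reflexivity.
Qed.

(* Pushing out [h] against [0] shows that every map killed by [d] is killed
   by [h], hence factors through [g]. *)
Lemma pushout_kernel_comp (X Y Z A P W : Obj C) (f : Hom X Y) (c : Hom Y A)
    (g : Hom Y Z) (h : Hom Z W) (d : Hom Z P) (i : Hom A P) :
  IsKernel f c -> IsKernel g h -> Monic i -> IsPushout g c d i ->
  IsKernel (comp g f) d.
Proof.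
  intros Hf Hg Hi [Hsq Hpo].
  apply kernelI.
  - rewrite comp_assoc, Hsq, <- comp_assoc, (proj1 Hf). apply compm0.
  - apply monic_comp; [exact (kernel_monic Hg) | exact (kernel_monic Hf)].
  - intros T t Ht.
    destruct (Hpo W h (zerom A W)) as [u [[Hud _] _]].
    { rewrite (proj1 Hg). symmetry; apply comp0m. }
    assert (Hht : comp h t = zerom T W).
    { rewrite <- Hud, <- comp_assoc, Ht. apply compm0. }
    destruct (kernel_factor Hg Hht) as [s Hs].
    assert (Hcs : comp c s = zerom T A).
    { apply Hi. rewrite compm0, comp_assoc, <- Hsq, <- comp_assoc, Hs. exact Ht. }
    destruct (kernel_factor Hf Hcs) as [r Hr].
    exists r. rewrite <- comp_assoc, Hr. exact Hs.
Qed.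

End Additive.

Section Conflations.
Variables (C : AddCat) (E : ConflStr C).

Lemma inflation_monic (a b : Obj C) (i : Hom a b) : Inflation E i -> Monic i.
Proof.
  intros [D [q Hiq]]. exact (kernel_monic (proj1 (confl_kc Hiq))).
Qed.

Lemma confl_kernel (K K' B D : Obj C) (k : Hom K B) (k' : Hom K' B) (d : Hom B D) :
  Confl E k d -> IsKernel k' d -> Confl E k' d.
Proof.
  intros Hkd Hk'.
  destruct (kernel_iso (proj1 (confl_kc Hkd)) Hk') as [u [Hu Hku]].
  apply (confl_iso Hkd Hu (idm_iso B) (idm_iso D)).
  - rewrite comp_id_l. symmetry; exact Hku.
  - rewrite comp_id_l, comp_id_r. reflexivity.
Qed.

Lemma kernel_deflation_inflation (K B D : Obj C) (k : Hom K B) (d : Hom B D) :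
  Deflation E d -> IsKernel k d -> Inflation E k.
Proof.
  intros [K0 [k0 Hk0d]] Hk. exists D, d. exact (confl_kernel Hk0d Hk).
Qed.

End Conflations.

Theorem mainTheorem12 (C : AddCat) (E : ConflStr C)
    (Hexact : DeflationExact E)
    (Acl : Obj C -> Prop) (Hne : exists a : Obj C, Acl a)
    (HA3 : AxA3 E Acl)
    (X Y Z : Obj C) (f : Hom X Y) (g : Hom Y Z)
    (Hf : Inflation E f) (Hg : Inflation E g)
    (HfA : AInvInflation E Acl f) :
  Inflation E (comp g f).
Proof.
  destruct HfA as [A [c [Hfc HA]]].
  destruct Hg as [W [h Hgh]].
  destruct (HA3 Y Z A g c (ex_intro _ W (ex_intro _ h Hgh))
              (ex_intro _ X (ex_intro _ f Hfc)) HA)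
    as [P [d [i [Hpo [Hd Hi]]]]].
  apply (kernel_deflation_inflation Hd).
  apply (pushout_kernel_comp (proj1 (confl_kc Hfc)) (proj1 (confl_kc Hgh))
           (inflation_monic Hi) Hpo).
Qed.
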